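(* Let $\Sigma$ be an alphabet with $|\Sigma|\ge 3$. A function $f\colon\Sigma^*\to\Sigma^*$ is congruence preserving if and only if there exist $n\in\mathbb{N}$ and words $w_0,\ldots,w_n\in\Sigma^*$ such that $f(x)=w_0xw_1x\cdots w_{n-1}xw_n$ for all $x\in\Sigma^*$.
   Context: $\Sigma^*$ denotes the free monoid over $\Sigma$: finite words over $\Sigma$ with concatenation, unit the empty word $\varepsilon$. A congruence on $\Sigma^*$ is an equivalence relation $\sim$ such that $u\sim v$ and $u'\sim v'$ imply $uu'\sim vv'$. A function $f\colon(\Sigma^* )^k\to\Sigma^*$ is congruence preserving (CP) if for every congruence $\sim$ on $\Sigma^*$ and all $u_1,\ldots,u_k,v_1,\ldots,v_k\in\Sigma^*$ with $u_i\sim v_i$ for $i=1,\ldots,k$, we have $f(u_1,\ldots,u_k)\sim f(v_1,\ldots,v_k)$. *)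

From mathcomp Require Import all_boot.
Set Implicit Arguments. Unset Strict Implicit. Unset Printing Implicit Defensive.

Definition congruence (T : Type) (R : seq T -> seq T -> Prop) : Prop :=
  [/\ (forall u, R u u),
      (forall u v, R u v -> R v u),
      (forall u v w, R u v -> R v w -> R u w) &
      (forall u v u' v', R u v -> R u' v' -> R (u ++ u') (v ++ v'))].

Definition congruence_preserving (T : Type) (f : seq T -> seq T) : Prop :=
  forall R : seq T -> seq T -> Prop, congruence R ->
    forall u v, R u v -> R (f u) (f v).

Definition interleave (T : Type) (n : nat) (w : nat -> seq T) (x : seq T) : seq T :=
  w 0 ++ flatten [seq x ++ w i.+1 | i <- iota 0 n].

From mathcomp Require Import all_boot.
Set Implicit Arguments.
Unset Strict Implicit.
Unset Printing Implicit Defensive.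

(* Every monoid morphism phi : Sigma^* -> Sigma^* has a congruence as kernel,
   so a congruence preserving f satisfies
   phi u = phi v -> phi (f u) = phi (f v).
   Renaming morphisms y |-> z force all the f(a), a a letter, to have the same
   length and, position by position, to carry either a constant letter or the
   letter a itself; so f agrees on letters with some x |-> w_0 x w_1 ... x w_n.
   Two congruence preserving functions agreeing on letters agree everywhere:
   given distinct letters s, t and a word x, a third letter c yields a morphism
   fixing s and t that identifies x with a shorter word (erase c) or with the
   letter c (send c to x), and a word is determined by its images under such
   morphisms, for all pairs s, t. *)

Definition morph (T : Type) (phi : T -> seq T) (u : seq T) : seq T :=
  flatten (map phi u).

Lemma morph_cons T (phi : T -> seq T) x u :
  morph phi (x :: u) = phi x ++ morph phi u.
Proof. by []. Qed.

Lemma morph_cat T (phi : T -> seq T) u v :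
  morph phi (u ++ v) = morph phi u ++ morph phi v.
Proof. by rewrite /morph map_cat flatten_cat. Qed.

Lemma morph_letters T (g : T -> T) u : morph (fun a => [:: g a]) u = map g u.
Proof. by elim: u => //= a u IH; rewrite morph_cons IH. Qed.

Lemma morph_id_on (T : eqType) (phi : T -> seq T) u :
  {in u, forall a, phi a = [:: a]} -> morph phi u = u.
Proof.
elim: u => //= a u IH phiu; rewrite morph_cons phiu ?mem_head // IH // => b bu.
by rewrite phiu // in_cons bu orbT.
Qed.

Lemma morph_erase (T : eqType) (c : T) u :
  morph (fun a => if a == c then [::] else [:: a]) u = filter (predC1 c) u.
Proof. by elim: u => //= a u IH; rewrite morph_cons IH; case: (a == c). Qed.

Lemma morph_congruence T (phi : T -> seq T) :
  congruence (fun u v => morph phi u = morph phi v).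
Proof.
split=> [//|u v -> //|u v w -> //|u v u' v' E E'].
by rewrite !morph_cat E E'.
Qed.

Lemma cp_morph T (f : seq T -> seq T) (phi : T -> seq T) u v :
  congruence_preserving f -> morph phi u = morph phi v ->
  morph phi (f u) = morph phi (f v).
Proof. by move=> cpf; apply: (cpf _ (morph_congruence phi)). Qed.

Lemma interleave_cp T n (w : nat -> seq T) :
  congruence_preserving (interleave n w).
Proof.
move=> R [Rrefl _ _ Rcat] u v Ruv; apply: (Rcat _ _ _ _ (Rrefl _)).
elim: (iota 0 n) => [|i s IH] /=; first exact: Rrefl.
exact: (Rcat _ _ _ _ (Rcat _ _ _ _ Ruv (Rrefl _)) IH).
Qed.

Section WordSeparation.

Variable T : eqType.
Hypothesis nontrivial : forall t : T, exists s, s != t.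

Lemma eq_from_separating_morph (u v : seq T) :
  (forall s t, s != t -> exists2 phi : T -> seq T,
     phi s = [:: s] /\ phi t = [:: t] & morph phi u = morph phi v) ->
  u = v.
Proof.
elim: u v => [|s u IH] [|t v] sep //.
- have [s st] := nontrivial t.
  by have [phi [_ phit]] := sep _ _ st; rewrite morph_cons phit.
- have [t ts] := nontrivial s.
  by have [phi [_ phis]] := sep _ _ ts; rewrite morph_cons phis.
- have [eq_st|st] := eqVneq s t; first subst t.
    congr (_ :: _); apply: IH => s' t' st'; have [phi fix_st E] := sep _ _ st'.
    exists phi => //; move: E; rewrite !morph_cons.
    by move/(congr1 (drop (size (phi s)))); rewrite !drop_size_cat.
  have [phi [phis phit]] := sep _ _ st.
  by rewrite !morph_cons phis phit => -[/eqP]; rewrite (negbTE st).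
Qed.

End WordSeparation.

Lemma third_letter (T : finType) (s t : T) :
  2 < #|T| -> exists c : T, (c != s) && (c != t).
Proof.
move=> T_gt2; have : 0 < #|[predC [:: s; t]]|.
  rewrite -(ltn_add2l #|[:: s; t]|) addn0 cardC.
  by rewrite (leq_ltn_trans (card_size _)).
by case/card_gt0P=> c; rewrite !inE negb_or; exists c.
Qed.

Lemma separating_reduction (T : finType) (x : seq T) (s t : T) :
  2 < #|T| -> s != t ->
  exists2 phi : T -> seq T, phi s = [:: s] /\ phi t = [:: t] &
    exists2 v, morph phi x = morph phi v & (size v == 1) || (size v < size x).
Proof.
move=> T_gt2 st.
case: (boolP (has (fun a => (a != s) && (a != t)) x)).
  case/hasP=> e ex /andP[es et].
  exists (fun a => if a == e then [::] else [:: a]).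
    by rewrite ![_ == e]eq_sym (negbTE es) (negbTE et).
  exists (filter (predC1 e) x); first by rewrite !morph_erase filter_id.
  apply/orP; right; rewrite size_filter -[ltnRHS](count_predC (predC1 e)).
  rewrite -[ltnLHS]addn0 ltn_add2l -has_count.
  by apply/hasP; exists e; rewrite /= ?eqxx.
move/hasPn=> x_st.
have [c /andP[cs ct]] := third_letter s t T_gt2.
exists (fun a => if a == c then x else [:: a]).
  by rewrite ![_ == c]eq_sym (negbTE cs) (negbTE ct).
exists [:: c] => //; rewrite morph_id_on; first by rewrite /morph /= eqxx cats0.
by move=> a ax; case: eqP => // eq_ac; move: (x_st a ax); rewrite eq_ac cs ct.
Qed.

Lemma cp_eq_on_letters (T : finType) (f g : seq T -> seq T) :
  2 < #|T| -> congruence_preserving f -> congruence_preserving g ->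
  (forall a, f [:: a] = g [:: a]) -> f =1 g.
Proof.
move=> T_gt2 cpf cpg fg x; have [k] := ubnP (size x).
elim: k x => // k IH x /ltnSE x_le_k.
apply: eq_from_separating_morph => [a|s t st].
  by have [c /andP[ca _]] := third_letter a a T_gt2; exists c.
have [phi fix_st [v xv v_small]] := separating_reduction x T_gt2 st.
exists phi => //.
have fgv : f v = g v.
  case/orP: v_small => [|v_lt]; last exact: IH (leq_trans v_lt x_le_k).
  by case: v {xv} => [|a []] //= _; apply: fg.
by rewrite (cp_morph cpf xv) fgv (cp_morph cpg xv).
Qed.

Definition rename (T : eqType) (y z a : T) : T := if a == y then z else a.

Lemma cp_rename_letter (T : eqType) (f : seq T -> seq T) (y z : T) :
  congruence_preserving f ->
  map (rename y z) (f [:: y]) = map (rename y z) (f [:: z]).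
Proof.
move=> cpf; rewrite -!morph_letters; apply: cp_morph cpf _.
by rewrite !morph_letters /= /rename eqxx if_same.
Qed.

Lemma size_cp_letter (T : eqType) (f : seq T -> seq T) (y z : T) :
  congruence_preserving f -> size (f [:: y]) = size (f [:: z]).
Proof.
by move=> cpf; rewrite -(size_map (rename y z)) cp_rename_letter // size_map.
Qed.

Lemma rename_eq (T : eqType) (y z a b : T) : y != z ->
  rename y z a = rename y z b -> [\/ a = b, a = y /\ b = z | a = z /\ b = y].
Proof.
rewrite /rename => yz.
case: (eqVneq a y) => [->|_]; case: (eqVneq b y) => [->|_] E.
- by constructor 1.
- by constructor 2.
- by constructor 3.
- by constructor 1.
Qed.

Lemma rename_triple (T : eqType) (a b c pa pb pc : T) :
  a != b -> a != c -> b != c ->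
  rename a b pa = rename a b pb -> rename a c pa = rename a c pc ->
  rename b c pb = rename b c pc ->
  pb = pa /\ pc = pa \/ [/\ pa = a, pb = b & pc = c].
Proof.
move=> ab ac bc /(rename_eq ab) E1 /(rename_eq ac) E2 /(rename_eq bc) E3.
case: E1 => [E1|[E1 E1']|[E1 E1']]; case: E2 => [E2|[E2 E2']|[E2 E2']];
  case: E3 => [E3|[E3 E3']|[E3 E3']]; subst;
  by [left | right | rewrite eqxx in ab ac bc].
Qed.

Lemma rename_invariant_const_or_id (T : finType) (p : T -> T) (a b : T) :
  2 < #|T| -> a != b -> (forall y z, rename y z (p y) = rename y z (p z)) ->
  forall x, p x = if p a == p b then p a else x.
Proof.
move=> T_gt2 ab p_rename x.
have [c [ca cb xabc]] : exists c, [/\ c != a, c != b & x \in [:: a; b; c]].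
  case: (boolP ((x != a) && (x != b))) => [/andP[xa xb]|].
    by exists x; rewrite !inE eqxx !orbT.
  rewrite negb_and !negbK => xab.
  have [c /andP[ca cb]] := third_letter a b T_gt2.
  by exists c; rewrite !inE orbA xab.
rewrite eq_sym in ca; rewrite eq_sym in cb.
rewrite !inE in xabc.
have [[pba pca]|[pa pb pc]] :=
  rename_triple ab ca cb (p_rename a b) (p_rename a c) (p_rename b c).
  by case/or3P: xabc => /eqP->; rewrite pba ?pca eqxx.
by case/or3P: xabc => /eqP->; rewrite pa pb ?pc (negbTE ab).
Qed.

Definition fill (T : Type) (t : seq (option T)) (x : seq T) : seq T :=
  flatten [seq if o is Some c then [:: c] else x | o <- t].

Lemma fill_letter (T : Type) (t : seq (option T)) x :
  fill t [:: x] = [seq if o is Some c then c else x | o <- t].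
Proof. by elim: t => //= o t IH; rewrite -IH; case: o. Qed.

Lemma fill_interleave (T : Type) (t : seq (option T)) :
  exists n w, forall x, fill t x = interleave n w x.
Proof.
elim: t => [|[c|] t [n [w IH]]]; first by exists 0, (fun _ => [::]).
  exists n, (fun i => if i is 0 then c :: w 0 else w i) => x.
  by rewrite /fill /= -/(fill _ _) IH.
exists n.+1, (fun i => if i is j.+1 then w j else [::]) => x.
rewrite /fill /= -/(fill _ _) IH /interleave /=.
by rewrite [iota 1 n](iotaDl 1 0 n) -map_comp catA.
Qed.

Definition letter_pattern (T : eqType) (u v : seq T) : seq (option T) :=
  [seq if p.1 == p.2 then Some p.1 else None | p <- zip u v].

Lemma cp_letter_pattern (T : finType) (f : seq T -> seq T) (a b x : T) :
  2 < #|T| -> congruence_preserving f -> a != b ->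
  f [:: x] = fill (letter_pattern (f [:: a]) (f [:: b])) [:: x].
Proof.
move=> T_gt2 cpf ab; rewrite fill_letter -map_comp.
have size_f y : size (f [:: y]) = size (f [:: a]) by apply: size_cp_letter.
apply: (eq_from_nth (x0 := x)).
  by rewrite size_map size_zip !size_f minnn.
move=> i; rewrite size_f => i_lt.
rewrite (nth_map (x, x)) ?size_zip ?size_f ?minnn // nth_zip ?size_f //=.
rewrite (rename_invariant_const_or_id (p := fun y => nth x (f [:: y]) i)
           T_gt2 ab).
  by case: eqP.
move=> y z; have := congr1 (nth x ^~ i) (cp_rename_letter y z cpf).
by rewrite !(nth_map x) ?size_f.
Qed.

Theorem mainTheorem2 (Sigma : finType) (hS : 3 <= #|Sigma|)
  (f : seq Sigma -> seq Sigma) :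
  congruence_preserving f <->
  exists (n : nat) (w : nat -> seq Sigma), forall x, f x = interleave n w x.
Proof.
split=> [cpf|[n [w fw]] R congR u v Ruv]; last first.
  by rewrite !fw; apply: interleave_cp.
have [a _] : exists a : Sigma, a \in Sigma.
  by apply/card_gt0P; apply: ltnW (ltnW hS).
have [b /andP[ba _]] := third_letter a a hS.
have [n [w fill_w]] := fill_interleave (letter_pattern (f [:: a]) (f [:: b])).
exists n, w; apply: cp_eq_on_letters => // [|x]; first exact: interleave_cp.
by rewrite -fill_w; apply: cp_letter_pattern; rewrite // eq_sym.
Qed.
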